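(* Let $0<q<1$ and $w,\nu\in\mathbb{C}$ with $q^{-\nu}\notin q^{\mathbb{Z}_+}$ (i.e. $q^{\nu+k}\ne1$ for all $k\in\mathbb{Z}_+$). Then \[ \mathfrak{F}\!\left(\left\{\frac{w}{q^{-(\nu+k)/2}-q^{(\nu+k)/2}}\right\}_{k=0}^\infty\right)={}_0\phi_1(;q^\nu;q,-q^{\nu+1/2}w^2). \]
   Context: Complex powers of $q$ are $q^s=e^{s\log q}$. $(a;q)_k=\prod_{j=0}^{k-1}(1-aq^j)$ and ${}_0\phi_1(;b;q,z)=\sum_{k=0}^\infty\frac{q^{k(k-1)}}{(q;q)_k(b;q)_k}z^k$. For a complex sequence $x=\{x_k\}_{k=0}^{\infty}$ with $\sum_{k\ge0}|x_kx_{k+1}|<\infty$, \[ \mathfrak{F}(x)=1+\sum_{m=1}^\infty(-1)^m\sum_{k_1=0}^\infty\ \sum_{k_2=k_1+2}^\infty\cdots\sum_{k_m=k_{m-1}+2}^\infty x_{k_1}x_{k_1+1}\cdots x_{k_m}x_{k_m+1}. \] *)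

From Stdlib Require Import Reals.
From Coquelicot Require Import Coquelicot.
Open Scope C_scope.

(* Complex power of a positive real: q^s = e^{s log q}, written out as
   q^{Re s} (cos (Im s * ln q) + i sin (Im s * ln q)). *)
Definition cpow (q : R) (s : C) : C :=
  Cmult (RtoC (Rpower q (Re s)))
        ((cos (Im s * ln q))%R, (sin (Im s * ln q))%R).

(* Sum of a complex series (componentwise Coquelicot Series; junk if divergent). *)
Definition CSeries (a : nat -> C) : C :=
  (Series (fun n => Re (a n)), Series (fun n => Im (a n))).

Definition ex_Cseries (a : nat -> C) : Prop :=
  exists l : C, is_series (V := C_NormedModule) a l.

Fixpoint qpoch (a : C) (q : R) (k : nat) : C :=
  match k with
  | O => RtoC 1
  | S k' => Cmult (qpoch a q k') (Cminus (RtoC 1) (Cmult a (RtoC (q ^ k'))))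
  end.

Definition phi01_term (b : C) (q : R) (z : C) (k : nat) : C :=
  Cdiv (Cmult (RtoC (q ^ (k * (k - 1)))) (Cpow z k))
       (Cmult (qpoch (RtoC q) q k) (qpoch b q k)).

Definition phi01 (b : C) (q : R) (z : C) : C := CSeries (phi01_term b q z).

(* Thus T x m 0 = sum_{k1>=0} sum_{k2>=k1+2} ... sum_{km>=k_{m-1}+2}
                   x_{k1} x_{k1+1} ... x_{km} x_{km+1}. *)
Fixpoint T (x : nat -> C) (m : nat) (j : nat) : C :=
  match m with
  | O => RtoC 1
  | S m' => CSeries (fun i => Cmult (Cmult (x (j + i)%nat) (x (j + i + 1)%nat))
                                    (T x m' (j + i + 2)%nat))
  end.

Definition F_outer_term (x : nat -> C) (m : nat) : C :=
  Cmult (Cpow (RtoC (-1)) (S m)) (T x (S m) 0).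

Definition Ffrak (x : nat -> C) : C := Cplus (RtoC 1) (CSeries (F_outer_term x)).

Definition Ffrak_converges (x : nat -> C) : Prop :=
  (forall m j : nat,
      ex_Cseries (fun i => Cmult (Cmult (x (j + i)%nat) (x (j + i + 1)%nat))
                                 (T x m (j + i + 2)%nat)))
  /\ ex_Cseries (F_outer_term x).

(* Put u_k = q^(nu+k), c = w^2 q^(1/2) and
   P_m(u) = q^(m(m-1)) (u c)^m / ((q;q)_m (u;q)_m), the m-th term of
   0phi1(;u;q,u c).  Then x_k x_(k+1) = c u_k / ((1 - u_k)(1 - u_k q)), and the
   identity P_(m+1)(u) - P_(m+1)(u q) = c u / ((1 - u)(1 - u q)) P_m(u q^2) makes
   every inner series of F(x) telescope: by induction on m, the m-fold inner
   sum starting at index j equals P_m(u_j), because P_(m+1)(u_j q^i) -> 0.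
   Hence (-1)^m times the m-th summand of F(x) is the m-th term of
   0phi1(;q^nu;q,-q^nu c), a series that converges absolutely since
   q^(m(m-1)) dominates the at most geometric growth of 1/|(q;q)_m (u;q)_m|. *)

From Stdlib Require Import Reals Lra Lia.
From Coquelicot Require Import Coquelicot.
Open Scope C_scope.

Lemma is_series_telescope (b : nat -> C) :
  is_lim_seq (fun n => Cmod (b n)) 0%R ->
  is_series (V := C_NormedModule) (fun n => b n - b (S n)) (b O).
Proof.
  intros Hb.
  assert (Hpartial : forall n, sum_n (fun k => b k - b (S k)) n = b O - b (S n)).
  { induction n as [|n IH].
    - now rewrite sum_O.
    - rewrite sum_Sn, IH. change (b O - b (S n) + (b (S n) - b (S (S n))) = b O - b (S (S n))).
      ring. }
  apply is_lim_seq_spec in Hb.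
  apply filterlim_locally. intros eps.
  destruct (Hb eps) as [N HN]. exists N. intros n Hn.
  rewrite Hpartial. apply (norm_compat1 (V := C_NormedModule)).
  change (Cmod (b O - b (S n) - b O) < eps)%R.
  replace (b O - b (S n) - b O) with (- b (S n)) by ring. rewrite Cmod_opp.
  specialize (HN (S n) ltac:(lia)). rewrite Rminus_0_r in HN.
  eapply Rle_lt_trans; [apply Rle_abs | exact HN].
Qed.

Lemma sum_n_Re (a : nat -> C) n : Re (sum_n a n) = sum_n (fun k => Re (a k)) n.
Proof.
  induction n as [|n IH]; [now rewrite !sum_O | now rewrite !sum_Sn, <- IH].
Qed.

Lemma sum_n_Im (a : nat -> C) n : Im (sum_n a n) = sum_n (fun k => Im (a k)) n.
Proof.
  induction n as [|n IH]; [now rewrite !sum_O | now rewrite !sum_Sn, <- IH].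
Qed.

Lemma CSeries_unique (a : nat -> C) (l : C) :
  is_series (V := C_NormedModule) a l -> CSeries a = l.
Proof.
  intros Ha.
  assert (Hcomp : is_series (fun n => Re (a n)) (Re l)
                  /\ is_series (fun n => Im (a n)) (Im l)).
  { split; apply filterlim_locally; intros eps;
      generalize (proj1 (filterlim_locally _ _) Ha eps); apply filter_imp;
      intros n [Hre Him].
    - rewrite <- sum_n_Re. exact Hre.
    - rewrite <- sum_n_Im. exact Him. }
  destruct Hcomp as [Hre Him]. unfold CSeries.
  rewrite (is_series_unique _ _ Hre), (is_series_unique _ _ Him).
  now destruct l.
Qed.

Lemma ex_series_of_Cmod (a : nat -> C) :
  ex_series (fun n => Cmod (a n)) -> ex_Cseries a.
Proof. exact (ex_series_le (V := C_CompleteNormedModule) a _ (fun n => Rle_refl _)). Qed.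

Lemma cpow_add q a b : cpow q (a + b) = cpow q a * cpow q b.
Proof.
  unfold cpow. destruct a as [a1 a2], b as [b1 b2]. simpl.
  rewrite Rpower_plus, Rmult_plus_distr_r, cos_plus, sin_plus.
  apply injective_projections; simpl; ring.
Qed.

Lemma cpow_R q r : cpow q (RtoC r) = RtoC (Rpower q r).
Proof.
  unfold cpow. simpl. rewrite Rmult_0_l, cos_0, sin_0.
  apply injective_projections; simpl; ring.
Qed.

Lemma cpow_mul_opp q a : cpow q a * cpow q (- a) = 1.
Proof.
  rewrite <- cpow_add. replace (a + - a) with (RtoC 0) by ring.
  rewrite cpow_R. unfold Rpower. now rewrite Rmult_0_l, exp_0.
Qed.

Lemma cpow_neq0 q a : cpow q a <> 0.
Proof.
  intros H. apply C1_nz. now rewrite <- (cpow_mul_opp q a), H, Cmult_0_l.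
Qed.

Lemma cpow_opp q a : cpow q (- a) = / cpow q a.
Proof.
  rewrite <- (Cmult_1_l (/ cpow q a)), <- (cpow_mul_opp q a).
  field. apply cpow_neq0.
Qed.

Lemma cpow_half_sq q a : cpow q (a / 2) * cpow q (a / 2) = cpow q a.
Proof. rewrite <- cpow_add. f_equal. field. Qed.

Lemma pow_le_one x n : (0 <= x <= 1)%R -> (x ^ n <= 1)%R.
Proof. intros Hx. rewrite <- (pow1 n). now apply pow_incr. Qed.

Lemma one_minus_neq0 (a : C) : a <> 1 -> 1 - a <> 0.
Proof. intros Ha E. apply Ha. replace a with (1 - (1 - a)) by ring. rewrite E. ring. Qed.

Lemma qpoch_shift u q n : qpoch u q (S n) = (1 - u) * qpoch (u * q) q n.
Proof.
  induction n as [|n IH].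
  - simpl. ring.
  - change (qpoch u q (S n) * (1 - u * RtoC (q ^ S n))
            = (1 - u) * (qpoch (u * q) q n * (1 - u * q * RtoC (q ^ n)))).
    rewrite IH, <- tech_pow_Rmult, RtoC_mult. ring.
Qed.

Lemma qpoch_add v q N n :
  qpoch v q (N + n) = qpoch v q N * qpoch (v * RtoC (q ^ N)) q n.
Proof.
  induction n as [|n IH].
  - rewrite Nat.add_0_r. simpl. ring.
  - rewrite Nat.add_succ_r. simpl. rewrite IH, pow_add, RtoC_mult. ring.
Qed.

Lemma qpoch_neq0 u q n : (forall i, u * RtoC (q ^ i) <> 1) -> qpoch u q n <> 0.
Proof.
  intros Hu. induction n as [|n IH]; simpl.
  - exact C1_nz.
  - apply Cmult_neq_0; [exact IH | apply one_minus_neq0, Hu].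
Qed.

Lemma qpow_succ_neq1 q i : (0 < q < 1)%R -> RtoC q * RtoC (q ^ i) <> 1.
Proof.
  intros Hq E. rewrite <- RtoC_mult in E. apply RtoC_inj in E.
  assert (q * q ^ i < 1)%R by (rewrite tech_pow_Rmult; apply pow_lt_1_compat; [lra|lia]).
  lra.
Qed.

Lemma qpoch_q_neq0 q n : (0 < q < 1)%R -> qpoch q q n <> 0.
Proof. intros Hq. apply qpoch_neq0. intros i. now apply qpow_succ_neq1. Qed.

Lemma Cmod_qpoch_ge_half_pow q u n : (0 <= q <= 1)%R -> (Cmod u <= / 2)%R ->
  ((/ 2) ^ n <= Cmod (qpoch u q n))%R.
Proof.
  intros Hq Hu. induction n as [|n IH]; simpl.
  - rewrite Cmod_1. lra.
  - rewrite Cmod_mult.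
    assert (Hfactor : (/ 2 <= Cmod (1 - u * RtoC (q ^ n)))%R).
    { assert (Htri := Cmod_triangle (1 - u * RtoC (q ^ n)) (u * RtoC (q ^ n))).
      replace (1 - u * RtoC (q ^ n) + u * RtoC (q ^ n)) with (RtoC 1) in Htri by ring.
      rewrite Cmod_1, Cmod_mult, Cmod_R, Rabs_pos_eq in Htri by (apply pow_le; lra).
      assert (0 <= q ^ n <= 1)%R by (split; [apply pow_le | apply pow_le_one]; lra).
      assert (0 <= Cmod u)%R by apply Cmod_ge_0.
      nra. }
    assert (0 <= (/ 2) ^ n)%R by (apply pow_le; lra).
    nra.
Qed.

Lemma eventually_Cmod_mul_pow_le q (v : C) (eps : R) : (0 < q < 1)%R -> (0 < eps)%R ->
  eventually (fun n => (Cmod (v * RtoC (q ^ n)) <= eps)%R).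
Proof.
  intros Hq Heps.
  assert (Hv := Cmod_ge_0 v).
  assert (Hgeom := is_lim_seq_geom q ltac:(rewrite Rabs_pos_eq; lra)).
  apply is_lim_seq_spec in Hgeom.
  destruct (Hgeom (mkposreal (eps / (Cmod v + 1)) ltac:(apply Rdiv_lt_0_compat; lra)))
    as [N HN].
  exists N. intros n Hn. specialize (HN n Hn). simpl in HN.
  rewrite Rminus_0_r in HN.
  rewrite Cmod_mult, Cmod_R.
  assert (Hsmall : (Cmod v * Rabs (q ^ n) <= (Cmod v + 1) * (eps / (Cmod v + 1)))%R).
  { apply Rmult_le_compat; try lra; apply Rabs_pos. }
  replace ((Cmod v + 1) * (eps / (Cmod v + 1)))%R with eps in Hsmall by (field; lra).
  exact Hsmall.
Qed.

Lemma pos_lower_bound_upto (f : nat -> R) N : (forall k, 0 < f k)%R ->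
  exists d, (0 < d)%R /\ forall k, (k <= N)%nat -> (d <= f k)%R.
Proof.
  intros Hf. induction N as [|N [d [Hd Hle]]].
  - exists (f O). split; [apply Hf|]. intros k Hk. replace k with O by lia. lra.
  - exists (Rmin d (f (S N))). split; [now apply Rmin_pos|].
    intros k Hk. destruct (Nat.eq_dec k (S N)) as [->|Hne].
    + apply Rmin_r.
    + eapply Rle_trans; [apply Rmin_l | apply Hle; lia].
Qed.

Lemma Cmod_qpoch_lower_bound q v : (0 < q < 1)%R -> (forall i, v * RtoC (q ^ i) <> 1) ->
  exists d, (0 < d)%R /\ forall k, (d * (/ 2) ^ k <= Cmod (qpoch v q k))%R.
Proof.
  intros Hq Hv.
  destruct (eventually_Cmod_mul_pow_le q v (/ 2) Hq ltac:(lra)) as [N HN].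
  destruct (pos_lower_bound_upto (fun k => Cmod (qpoch v q k)) N) as [d [Hd Hle]].
  { intros k. apply Cmod_gt_0, qpoch_neq0, Hv. }
  exists d. split; [exact Hd|]. intros k.
  assert (Hhalf : forall j, (0 < (/ 2) ^ j <= 1)%R)
    by (intros j; split; [apply pow_lt | apply pow_le_one]; lra).
  destruct (Nat.le_gt_cases k N) as [HkN|HkN].
  - specialize (Hle k HkN). specialize (Hhalf k). simpl in Hle. nra.
  - replace k with (N + (k - N))%nat by lia.
    rewrite qpoch_add, Cmod_mult, pow_add.
    assert (Htail := Cmod_qpoch_ge_half_pow q _ (k - N) ltac:(lra) (HN N (le_n N))).
    specialize (Hle N (le_n N)). simpl in Hle.
    assert (H1 := Hhalf N). assert (H2 := Hhalf (k - N)%nat).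
    apply Rle_trans with (d * (/ 2) ^ (k - N))%R.
    + apply Rmult_le_compat_l; nra.
    + apply Rmult_le_compat; lra.
Qed.

Lemma phi01_term_0 b q z : phi01_term b q z 0 = 1.
Proof. unfold phi01_term. simpl. field. Qed.

Lemma phi01_term_opp b q z k :
  phi01_term b q (- z) k = Cpow (RtoC (-1)) k * phi01_term b q z k.
Proof.
  unfold phi01_term. replace (- z) with (RtoC (-1) * z) by (simpl; ring).
  rewrite Cpow_mult_l. unfold Cdiv. ring.
Qed.

Lemma gauss_exponent_succ m : (S m * (S m - 1) = m * (m - 1) + m + m)%nat.
Proof. destruct m; simpl; [reflexivity|]. rewrite Nat.sub_0_r. lia. Qed.

Lemma phi01_term_telescope q c u m : (0 < q < 1)%R -> (forall i, u * RtoC (q ^ i) <> 1) ->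
  phi01_term u q (u * c) (S m) - phi01_term (u * q) q (u * q * c) (S m) =
  c * u / ((1 - u) * (1 - u * q)) * phi01_term (u * q * q) q (u * q * q * c) m.
Proof.
  intros Hq Hu.
  assert (Hfactor : forall i, 1 - u * RtoC (q ^ i) <> 0)
    by (intros i; apply one_minus_neq0, Hu).
  assert (H0 := Hfactor O). assert (H1 := Hfactor 1%nat). assert (HSm := Hfactor (S m)).
  simpl in H0, H1, HSm. rewrite Cmult_1_r in H0. rewrite Rmult_1_r in H1.
  rewrite RtoC_mult, Cmult_assoc in HSm.
  assert (Hqq : qpoch (u * RtoC q * RtoC q) q m <> 0).
  { apply qpoch_neq0. intros i.
    replace (u * RtoC q * RtoC q * RtoC (q ^ i)) with (u * RtoC (q ^ S (S i)))
      by (simpl; rewrite !RtoC_mult; ring).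
    apply Hu. }
  assert (Hqt := one_minus_neq0 _ (qpow_succ_neq1 q m Hq)).
  unfold phi01_term.
  rewrite (qpoch_shift u), (qpoch_shift (u * RtoC q)).
  (* (u q; q)_(m+1) read from both ends *)
  assert (Hsplit : qpoch (u * RtoC q) q m
                   = (1 - u * RtoC q) * qpoch (u * RtoC q * RtoC q) q m
                     / (1 - u * RtoC q * RtoC (q ^ m))).
  { rewrite <- qpoch_shift. simpl. field. exact HSm. }
  rewrite Hsplit.
  change (qpoch (RtoC q) q (S m)) with (qpoch (RtoC q) q m * (1 - RtoC q * RtoC (q ^ m))).
  rewrite gauss_exponent_succ, !pow_add, !RtoC_mult.
  replace (u * RtoC q * c) with (u * c * RtoC q) by ring.
  replace (u * RtoC q * RtoC q * c) with (u * c * RtoC q * RtoC q) by ring.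
  rewrite !Cpow_mult_l, !Cpow_S, !RtoC_pow.
  field. rewrite <- RtoC_pow. repeat split; auto using qpoch_q_neq0.
Qed.

Lemma Cmod_phi01_term_le q b z k (d : R) : (0 < q < 1)%R -> (0 < d)%R ->
  (d <= Cmod (qpoch b q k))%R ->
  (Cmod (phi01_term b q z k)
     <= q ^ (k * (k - 1)) * Cmod z ^ k / (Cmod (qpoch q q k) * d))%R.
Proof.
  intros Hq Hd Hb.
  assert (HQ : (0 < Cmod (qpoch q q k))%R) by (apply Cmod_gt_0, qpoch_q_neq0, Hq).
  assert (Hb0 : qpoch b q k <> 0) by (intros E; rewrite E, Cmod_0 in Hb; lra).
  unfold phi01_term.
  rewrite Cmod_div by (apply Cmult_neq_0; [apply qpoch_q_neq0, Hq | exact Hb0]).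
  rewrite !Cmod_mult, Cmod_R, Rabs_pos_eq, Cmod_pow by (apply pow_le; lra).
  apply Rmult_le_compat_l.
  - apply Rmult_le_pos; apply pow_le; [lra | apply Cmod_ge_0].
  - apply Rinv_le_contravar; [now apply Rmult_lt_0_compat|].
    apply Rmult_le_compat_l; lra.
Qed.

Lemma phi01_term_scaled_lim q c v m : (0 < q < 1)%R ->
  is_lim_seq (fun i => Cmod (phi01_term (v * RtoC (q ^ i)) q (v * RtoC (q ^ i) * c) (S m))) 0%R.
Proof.
  intros Hq.
  set (k := S m).
  set (K := (q ^ (k * (k - 1)) * (Cmod v * Cmod c) ^ k
             / (Cmod (qpoch q q k) * (/ 2) ^ k))%R).
  assert (HK : (0 <= K)%R).
  { unfold K. apply Rmult_le_pos.
    - apply Rmult_le_pos; apply pow_le; [lra|].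
      apply Rmult_le_pos; apply Cmod_ge_0.
    - apply Rlt_le, Rinv_0_lt_compat, Rmult_lt_0_compat.
      + apply Cmod_gt_0, qpoch_q_neq0, Hq.
      + apply pow_lt; lra. }
  apply is_lim_seq_le_le_loc with (u := fun _ => 0%R) (w := fun i => (K * q ^ i)%R).
  - destruct (eventually_Cmod_mul_pow_le q v (/ 2) Hq ltac:(lra)) as [N HN].
    exists N. intros i Hi. split; [apply Cmod_ge_0|].
    assert (Hqi : (0 <= q ^ i <= 1)%R) by (split; [apply pow_le | apply pow_le_one]; lra).
    eapply Rle_trans.
    { apply (Cmod_phi01_term_le _ _ _ _ ((/ 2) ^ k)%R); [exact Hq | apply pow_lt; lra |].
      apply Cmod_qpoch_ge_half_pow; [lra | exact (HN i Hi)]. }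
    fold k.
    replace (q ^ (k * (k - 1)) * Cmod (v * RtoC (q ^ i) * c) ^ k
               / (Cmod (qpoch q q k) * (/ 2) ^ k))%R
      with (K * (q ^ i) ^ k)%R.
    2:{ unfold K. rewrite !Cmod_mult, Cmod_R, Rabs_pos_eq by lra.
        rewrite !Rpow_mult_distr. unfold Rdiv. ring. }
    apply Rmult_le_compat_l; [exact HK|].
    unfold k. simpl. assert (0 <= (q ^ i) ^ m <= 1)%R by (split; [apply pow_le | apply pow_le_one]; lra).
    nra.
  - apply is_lim_seq_const.
  - replace (Finite 0%R) with (Rbar_mult K 0%R) by (simpl; f_equal; ring).
    apply is_lim_seq_scal_l, is_lim_seq_geom. rewrite Rabs_pos_eq; lra.
Qed.

Lemma ex_series_gauss_geom q r : (0 < q < 1)%R -> (0 < r)%R ->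
  ex_series (fun k => q ^ (k * (k - 1)) * r ^ k)%R.
Proof.
  intros Hq Hr.
  assert (Hpos : forall k, (0 < q ^ (k * (k - 1)) * r ^ k)%R)
    by (intros k; apply Rmult_lt_0_compat; apply pow_lt; lra).
  apply ex_series_Rabs, (ex_series_DAlembert _ 0%R); [lra | intros n; apply Rgt_not_eq, Hpos |].
  apply (is_lim_seq_ext (fun n => r * (q * q) ^ n)%R).
  - intros n.
    rewrite gauss_exponent_succ.
    assert (Hn := Hpos n).
    assert (0 < q ^ n)%R by (apply pow_lt; lra).
    rewrite Rabs_pos_eq.
    + rewrite !pow_add, Rpow_mult_distr. simpl. field. split; apply pow_nonzero; lra.
    + apply Rlt_le, Rdiv_lt_0_compat; [|exact Hn].
      apply Rmult_lt_0_compat; apply pow_lt; lra.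
  - replace (Finite 0%R) with (Rbar_mult r 0%R) by (simpl; f_equal; ring).
    apply is_lim_seq_scal_l, is_lim_seq_geom. rewrite Rabs_pos_eq; nra.
Qed.

Lemma ex_series_Cmod_phi01_term q b z : (0 < q < 1)%R -> (forall i, b * RtoC (q ^ i) <> 1) ->
  ex_series (fun k => Cmod (phi01_term b q z k)).
Proof.
  intros Hq Hb.
  destruct (Cmod_qpoch_lower_bound q q Hq (fun i => qpow_succ_neq1 q i Hq)) as [d1 [Hd1 B1]].
  destruct (Cmod_qpoch_lower_bound q b Hq Hb) as [d2 [Hd2 B2]].
  set (r := (4 * Cmod z + 1)%R).
  assert (Hz := Cmod_ge_0 z).
  apply (ex_series_le (V := R_CompleteNormedModule) _
           (fun k => / (d1 * d2) * (q ^ (k * (k - 1)) * r ^ k))%R).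
  2:{ apply (ex_series_scal_l (V := R_NormedModule)), ex_series_gauss_geom; unfold r; lra. }
  intros k. change (norm (Cmod (phi01_term b q z k))) with (Rabs (Cmod (phi01_term b q z k))).
  rewrite Rabs_pos_eq by apply Cmod_ge_0.
  assert (Hh : (0 < (/ 2) ^ k)%R) by (apply pow_lt; lra).
  eapply Rle_trans.
  { apply (Cmod_phi01_term_le q b z k (d2 * (/ 2) ^ k)); [exact Hq | nra | apply B2]. }
  assert (HQ := B1 k).
  assert (HA : (0 <= q ^ (k * (k - 1)))%R) by (apply pow_le; lra).
  assert (Hzk : (0 <= Cmod z ^ k)%R) by (apply pow_le; lra).
  apply Rle_trans with (q ^ (k * (k - 1)) * Cmod z ^ k / (d1 * (/ 2) ^ k * (d2 * (/ 2) ^ k)))%R.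
  - apply Rmult_le_compat_l; [nra|].
    apply Rinv_le_contravar; [repeat apply Rmult_lt_0_compat; lra|].
    apply Rmult_le_compat_r; nra.
  - replace (q ^ (k * (k - 1)) * Cmod z ^ k / (d1 * (/ 2) ^ k * (d2 * (/ 2) ^ k)))%R
      with (/ (d1 * d2) * (q ^ (k * (k - 1)) * (4 * Cmod z) ^ k))%R.
    2:{ rewrite Rpow_mult_distr, pow_inv.
        replace (4 ^ k)%R with ((2 ^ k) * (2 ^ k))%R by (rewrite <- Rpow_mult_distr; f_equal; lra).
        field. repeat split; try lra; apply pow_nonzero; lra. }
    apply Rmult_le_compat_l; [apply Rlt_le, Rinv_0_lt_compat; nra|].
    apply Rmult_le_compat_l; [exact HA|].
    apply pow_incr. unfold r. lra.
Qed.

Section QBesselSequence.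

Variables (q : R) (w nu : C).
Hypothesis Hq : (0 < q < 1)%R.
Hypothesis Hnu : forall k : nat, cpow q (nu + RtoC (INR k)) <> 1.

Let u (k : nat) : C := cpow q (nu + RtoC (INR k)).
Let c : C := w * w * RtoC (Rpower q (/ 2)).
Let x (k : nat) : C :=
  w / (cpow q (- ((nu + RtoC (INR k)) / 2)) - cpow q ((nu + RtoC (INR k)) / 2)).
Let z : C := - (cpow q (nu + RtoC (/ 2)) * w ^ 2).

Lemma u_add j i : u (j + i) = u j * RtoC (q ^ i).
Proof.
  unfold u. rewrite plus_INR, RtoC_plus, Cplus_assoc, cpow_add, cpow_R, Rpower_pow by lra.
  reflexivity.
Qed.

Lemma u_succ k : u (S k) = u k * RtoC q.
Proof. rewrite <- Nat.add_1_r, u_add. f_equal. f_equal. apply pow_1. Qed.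

Lemma u_0 : u O = cpow q nu.
Proof. unfold u. simpl. f_equal. ring. Qed.

Lemma u_mul_pow_neq1 j i : u j * RtoC (q ^ i) <> 1.
Proof. rewrite <- u_add. apply Hnu. Qed.

Lemma x_eq k : x k = w * cpow q ((nu + RtoC (INR k)) / 2) / (1 - u k).
Proof.
  unfold x. rewrite cpow_opp.
  assert (Hh := cpow_neq0 q ((nu + RtoC (INR k)) / 2)).
  assert (Hd := one_minus_neq0 _ (Hnu k)). fold (u k) in Hd.
  assert (Hsq := cpow_half_sq q (nu + RtoC (INR k))). fold (u k) in Hsq.
  set (h := cpow q ((nu + RtoC (INR k)) / 2)) in *.
  rewrite <- Hsq in *. field. auto.
Qed.

Lemma x_mul_x_succ k : x k * x (S k) = c * u k / ((1 - u k) * (1 - u k * RtoC q)).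
Proof.
  rewrite !x_eq, u_succ.
  assert (Hhalf : cpow q ((nu + RtoC (INR k)) / 2) * cpow q ((nu + RtoC (INR (S k))) / 2)
                  = u k * RtoC (Rpower q (/ 2))).
  { unfold u. rewrite <- cpow_R, <- !cpow_add. f_equal.
    rewrite S_INR, !RtoC_plus, RtoC_inv by lra. field. }
  assert (H0 := one_minus_neq0 _ (Hnu k)).
  assert (H1 := one_minus_neq0 _ (Hnu (S k))). fold (u (S k)) in H1. rewrite u_succ in H1.
  replace (c * u k) with (w * w * (u k * RtoC (Rpower q (/ 2)))) by (unfold c; ring).
  rewrite <- Hhalf. field. auto.
Qed.

Lemma is_series_T_step m :
  (forall j, T x m j = phi01_term (u j) q (u j * c) m) ->
  forall j, is_series (V := C_NormedModule)
    (fun i => x (j + i) * x (j + i + 1) * T x m (j + i + 2))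
    (phi01_term (u j) q (u j * c) (S m)).
Proof.
  intros IH j.
  set (b i := phi01_term (u (j + i)) q (u (j + i) * c) (S m)).
  apply (is_series_ext (fun i => b i - b (S i))).
  - intros i. unfold b. rewrite IH.
    replace (j + i + 1)%nat with (S (j + i)) by lia.
    replace (j + i + 2)%nat with (S (S (j + i))) by lia.
    replace (j + S i)%nat with (S (j + i)) by lia.
    rewrite x_mul_x_succ, !u_succ.
    apply phi01_term_telescope; [exact Hq | apply u_mul_pow_neq1].
  - replace (phi01_term (u j) q (u j * c) (S m)) with (b O) by (unfold b; now rewrite Nat.add_0_r).
    apply is_series_telescope. unfold b.
    apply (is_lim_seq_ext
             (fun i => Cmod (phi01_term (u j * RtoC (q ^ i)) q (u j * RtoC (q ^ i) * c) (S m)))).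
    + intros i. now rewrite u_add.
    + apply phi01_term_scaled_lim, Hq.
Qed.

Lemma T_x_eq m j : T x m j = phi01_term (u j) q (u j * c) m.
Proof.
  revert j. induction m as [|m IH]; intros j.
  - symmetry. apply phi01_term_0.
  - apply CSeries_unique, is_series_T_step, IH.
Qed.

Lemma phi01_term_z k :
  phi01_term (cpow q nu) q z k = Cpow (RtoC (-1)) k * phi01_term (u O) q (u O * c) k.
Proof.
  unfold z. rewrite <- phi01_term_opp, u_0, cpow_add, cpow_R.
  f_equal. unfold c. simpl. ring.
Qed.

Lemma ex_Cseries_phi01_z : ex_Cseries (phi01_term (cpow q nu) q z).
Proof.
  apply ex_series_of_Cmod, ex_series_Cmod_phi01_term; [exact Hq|].
  intros i. rewrite <- u_0. apply u_mul_pow_neq1.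
Qed.

Lemma is_series_F_outer_term_x (L : C) :
  is_series (V := C_NormedModule) (phi01_term (cpow q nu) q z) L ->
  is_series (V := C_NormedModule) (F_outer_term x) (L - 1).
Proof.
  intros HL.
  apply (is_series_ext (fun m => phi01_term (cpow q nu) q z (S m))).
  - intros m. unfold F_outer_term. now rewrite T_x_eq, phi01_term_z.
  - apply is_series_incr_1.
    replace L with (L - 1 + phi01_term (cpow q nu) q z O) in HL
      by (rewrite phi01_term_0; ring).
    exact HL.
Qed.

Lemma Ffrak_converges_x : Ffrak_converges x.
Proof.
  split.
  - intros m j. eexists. apply is_series_T_step. intros j'. apply T_x_eq.
  - destruct ex_Cseries_phi01_z as [L HL].
    exists (L - 1). now apply is_series_F_outer_term_x.
Qed.

Lemma Ffrak_x : Ffrak x = phi01 (cpow q nu) q z.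
Proof.
  destruct ex_Cseries_phi01_z as [L HL].
  unfold Ffrak, phi01.
  rewrite (CSeries_unique _ _ (is_series_F_outer_term_x L HL)), (CSeries_unique _ _ HL).
  ring.
Qed.

End QBesselSequence.

Theorem mainTheorem6 (q : R) (w nu : C) :
  (0 < q < 1)%R ->
  (forall k : nat, cpow q (Cplus nu (RtoC (INR k))) <> RtoC 1) ->
  let x := fun k : nat =>
    Cdiv w (Cminus (cpow q (Copp (Cdiv (Cplus nu (RtoC (INR k))) (RtoC 2))))
                   (cpow q (Cdiv (Cplus nu (RtoC (INR k))) (RtoC 2)))) in
  Ffrak_converges x
  /\ ex_Cseries (phi01_term (cpow q nu) q
                   (Copp (Cmult (cpow q (Cplus nu (RtoC (/ 2)))) (Cpow w 2))))
  /\ Ffrak x = phi01 (cpow q nu) q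
                 (Copp (Cmult (cpow q (Cplus nu (RtoC (/ 2)))) (Cpow w 2))).
Proof.
  intros Hq Hnu x.
  split; [|split].
  - exact (Ffrak_converges_x q w nu Hq Hnu).
  - exact (ex_Cseries_phi01_z q w nu Hq Hnu).
  - exact (Ffrak_x q w nu Hq Hnu).
Qed.
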